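(* If $B,C\in \mathcal{B}_{A}(\mathcal{H})$, then \begin{align*} d\omega _{A_{0}}^{2}\left( \begin{bmatrix} 0 & B \\ C & 0 \end{bmatrix} \right) &\leq \frac{1}{4}\max \left\{ \omega _{A}\left( BB^{\sharp _{A}}+C^{\sharp _{A}}C+4\left( C^{\sharp _{A}}C\right) ^{2}\right) ,\omega _{A}\left( B^{\sharp _{A}}B+CC^{\sharp _{A}}+4\left( B^{\sharp _{A}}B\right) ^{2}\right) \right\} \\ &\quad +\frac{1}{2}\max \left\{ \omega _{A}\left( BC\right) ,\omega _{A}\left( CB\right) \right\}. \end{align*}
   Context: $\mathcal{H}$ is a complex Hilbert space and $A\in\mathcal{B}(\mathcal{H})$ is a positive operator; $\langle x,z\rangle_A=\langle Ax,z\rangle$ and $\|z\|_A=\|A^{1/2}z\|$. $\mathcal{B}_A(\mathcal{H})$ denotes the set of bounded operators $S$ on $\mathcal{H}$ admitting an $A$-adjoint; $S^{\sharp_A}=A^{\dagger}S^*A$ is the distinguished $A$-adjoint ($A^\dagger$ the Moore-Penrose inverse). $\omega_A(S)=\sup\{|\langle Sz,z\rangle_A|:\|z\|_A=1\}$ is the $A$-numerical radius. $A_0=\begin{bmatrix} A&0\\0&A\end{bmatrix}$ on $\mathcal{H}\oplus\mathcal{H}$ induces $\langle x,z\rangle_{A_0}=\langle x_1,z_1\rangle_A+\langle x_2,z_2\rangle_A$, and $d\omega_{A_0}(X)=\sup\{(|\langle Xz,z\rangle_{A_0}|^2+\|Xz\|_{A_0}^4)^{1/2}:\|z\|_{A_0}=1\}$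 is the $A_0$-Davis-Wielandt radius. *)

From HB Require Import structures.
From mathcomp Require Import all_boot all_order all_algebra.
From mathcomp Require Import all_classical all_reals.
From mathcomp Require Import complex.
Set Implicit Arguments. Unset Strict Implicit. Unset Printing Implicit Defensive.
Import Order.TTheory GRing.Theory Num.Theory.
Local Open Scope ring_scope.
Local Open Scope classical_set_scope.

Notation cnorm := ComplexField.Normc.normc.

Section Defs.
Variables (R : realType) (V : lmodType R[i]) (ip : V -> V -> R[i]).

Definition hnorm (x : V) : R := Num.sqrt (complex.Re (ip x x)).

Record hilbert : Prop := {
  ip_linl : forall (a : R[i]) (x y z : V), ip (a *: x + y) z = a * ip x z + ip y z;
  ip_conj : forall x y : V, ip y x = (ip x y)^*;
  ip_pos : forall x : V, 0 <= ip x x;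
  ip_def : forall x : V, ip x x = 0 -> x = 0;
  ip_complete : forall u : nat -> V,
    (forall e : R, 0 < e -> exists N : nat, forall m n : nat,
        (N <= m)%N -> (N <= n)%N -> hnorm (u m - u n) < e) ->
    exists l : V, forall e : R, 0 < e -> exists N : nat, forall n : nat,
        (N <= n)%N -> hnorm (u n - l) < e }.

Definition bounded_op (T : V -> V) : Prop :=
  (forall (a : R[i]) (x y : V), T (a *: x + y) = a *: T x + T y) /\
  exists M : R, forall x : V, hnorm (T x) <= M * hnorm x.

Definition positive_op (A : V -> V) : Prop :=
  bounded_op A /\ forall z : V, 0 <= ip (A z) z.

Definition ipA (A : V -> V) (x z : V) : R[i] := ip (A x) z.
Definition normA (A : V -> V) (z : V) : R := Num.sqrt (complex.Re (ipA A z z)).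

Definition is_A_adjoint (A S T : V -> V) : Prop :=
  bounded_op T /\ forall x y : V, ipA A (S x) y = ipA A x (T y).

Definition in_BA (A S : V -> V) : Prop :=
  bounded_op S /\ exists T : V -> V, is_A_adjoint A S T.

(* T = S^{#_A} = A^dagger S^* A : the unique A-adjoint of S whose range lies
   in closure(R(A)) = N(A)^perp *)
Definition is_sharpA (A S T : V -> V) : Prop :=
  is_A_adjoint A S T /\ forall (y n : V), A n = 0 -> ip (T y) n = 0.

Definition omegaA (A S : V -> V) : R :=
  sup [set cnorm (ipA A (S z) z) | z in [set z | normA A z = 1]].

(* A_0 = diag(A, A) on H (+) H *)
Definition ipA0 (A : V -> V) (x z : V * V) : R[i] :=
  ipA A x.1 z.1 + ipA A x.2 z.2.
Definition normA0 (A : V -> V) (z : V * V) : R :=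
  Num.sqrt (complex.Re (ipA0 A z z)).

Definition dwA0 (A : V -> V) (X : V * V -> V * V) : R :=
  sup [set Num.sqrt (cnorm (ipA0 A (X z) z) ^+ 2 + normA0 A (X z) ^+ 4)
      | z in [set z | normA0 A z = 1]].

Definition antidiag (B C : V -> V) (z : V * V) : V * V := (B z.2, C z.1).

End Defs.

(* Write z = (x, y) with ||x||_A^2 + ||y||_A^2 = 1, so that the operator matrix T maps z to
   (By, Cx).  Buzano's inequality for the unit vector z and the pair Tz, (C^# y, B^# x) gives
     |<Tz, z>|^2 <= (||By||^2 + ||Cx||^2 + ||C^# y||^2 + ||B^# x||^2) / 4
                    + (|<BCx, x>| + |<CBy, y>|) / 2,
   and Cauchy-Schwarz for <(C^# C x, B^# B y), z> = ||Tz||^2 gives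
     ||Tz||^4 <= ||C^# C x||^2 + ||B^# B y||^2.
   Regrouped, the x-terms are <(BB^# + C^#C + 4 (C^#C)^2) x, x> and |<BCx, x>|, the y-terms
   <(B^#B + CC^# + 4 (B^#B)^2) y, y> and |<CBy, y>|; each is at most an A-numerical radius times
   ||x||^2 or ||y||^2, and a convex combination of two radii is at most their maximum.
   Since the A-numerical radius is a supremum, the A-numerical ranges must be bounded, i.e. an
   operator S with an A-adjoint T must be A-bounded.  With P = TS, ||Su||^2 = <u, Pu>, and by
   Cauchy-Schwarz k |-> ||P^k u||^2 is log-convex, so it grows at least geometrically with ratio
   ||Pu||^2 / ||u||^2; as S and T are bounded and ||.||_A <= c ||.||, it also grows at most
   geometrically, which bounds that ratio. *)

From HB Require Import structures.
From mathcomp Require Import all_boot all_order all_algebra.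
From mathcomp Require Import all_classical all_reals.
From mathcomp Require Import complex.
From mathcomp Require Import ring lra.
Import Order.TTheory GRing.Theory Num.Theory.
Local Open Scope ring_scope.

Set Implicit Arguments.
Unset Strict Implicit.
Local Notation "x %:C" := (real_complex _ x) (format "x %:C") : ring_scope.

Lemma le1_of_bounded_powers (R : archiRealFieldType) (r c : R) :
  (forall n : nat, r ^+ n <= c) -> r <= 1.
Proof.
move=> bounded; rewrite leNgt; apply/negP => r_gt1.
have Bernoulli n : 1 + n%:R * (r - 1) <= r ^+ n.
  elim: n => [|n IH]; first by rewrite mul0r addr0 expr0.
  have : 0 <= n%:R * (r - 1) * (r - 1) by rewrite !mulr_ge0 // subr_ge0 ltW.
  rewrite exprS mulrSr; nra.
have c_ge1 : 1 <= c by have := bounded 0%N; rewrite expr0.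
have r1_gt0 : 0 < r - 1 by rewrite subr_gt0.
have := archi_boundP (divr_ge0 (le_trans ler01 c_ge1) (ltW r1_gt0)).
have := le_trans (Bernoulli (Num.bound (c / (r - 1)))) (bounded _).
move: (Num.bound _) => n; rewrite ltr_pdivrMr //; lra.
Qed.

Section LogConvexSequence.
Variables (R : archiRealFieldType) (s : nat -> R).
Hypothesis s_ge0 : forall k, 0 <= s k.
Hypothesis s_logconvex : forall k, s k.+1 ^+ 2 <= s k * s k.+2.

Lemma logconvex_geometric_lb : 0 < s 0%N ->
  forall n, (s 1%N / s 0%N) ^+ n * s 0%N <= s n.
Proof.
move=> s0_gt0; set rho := s 1%N / s 0%N.
have step k : rho * s k <= s k.+1.
  elim: k => [|k IH]; first by rewrite /rho divfK ?gt_eqF.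
  have [sk_eq0|sk_gt0] := eqVneq (s k) 0.
    have := s_logconvex k; rewrite sk_eq0 mul0r => sq_le0.
    have -> : s k.+1 = 0 by apply/eqP; rewrite -sqrf_eq0 eq_le sq_le0 sqr_ge0.
    by rewrite mulr0.
  have {}sk_gt0 : 0 < s k by rewrite lt_def sk_gt0 s_ge0.
  rewrite -(ler_pM2l sk_gt0); apply: le_trans (s_logconvex k).
  by rewrite expr2 mulrCA mulrA ler_wpM2r.
elim=> [|n IH]; first by rewrite expr0 mul1r.
rewrite exprS -mulrA; apply: le_trans (step n).
by rewrite ler_wpM2l // divr_ge0.
Qed.

Lemma logconvex_ratio_le (m K : R) : 0 < m ->
  (forall n, s n <= K * m ^+ n) -> s 1%N <= m * s 0%N.
Proof.
move=> m_gt0 growth.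
have [s0_eq0|s0_gt0] := eqVneq (s 0%N) 0.
  have := s_logconvex 0; rewrite s0_eq0 mul0r mulr0.
  by have := s_ge0 1; nra.
have {}s0_gt0 : 0 < s 0%N by rewrite lt_def s0_gt0 s_ge0.
have : s 1%N / s 0%N / m <= 1.
  apply: (@le1_of_bounded_powers _ _ (K / s 0%N)) => n.
  rewrite expr_div_n ler_pdivrMr ?exprn_gt0 // mulrAC ler_pdivlMr //.
  exact: le_trans (logconvex_geometric_lb s0_gt0 n) (growth n).
by rewrite ler_pdivrMr // mul1r ler_pdivrMr.
Qed.

End LogConvexSequence.

Lemma iter_le_geometric (R : realDomainType) (T : Type) (g : T -> R) (P : T -> T) (c : R) :
  0 <= c -> (forall u, g (P u) <= c * g u) -> forall n u, g (iter n P u) <= c ^+ n * g u.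
Proof.
move=> c_ge0 gP; elim=> [|n IH] u; first by rewrite expr0 mul1r.
by rewrite iterS exprS -mulrA; apply: le_trans (gP _) _; rewrite ler_wpM2l.
Qed.

Lemma le_of_sqr_le_mul (R : realFieldType) (a b c : R) : 0 <= a -> 0 <= b -> 0 <= c ->
  a ^+ 2 <= c * b ^+ 2 -> a <= (c + 1) * b.
Proof.
move=> a_ge0 b_ge0 c_ge0 sq_le.
rewrite -ler_sqr ?nnegrE ?mulr_ge0 ?addr_ge0 //; apply: le_trans sq_le _.
by rewrite exprMn ler_wpM2r ?sqr_ge0 //; nra.
Qed.

Lemma le_mul_of_quadratic_ge0 (R : realFieldType) (p q N : R) : 0 <= q -> 0 <= N ->
  (forall r, 0 <= p - 2 * r * N + r ^+ 2 * N * q) -> N <= p * q.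
Proof.
move=> q_ge0 N_ge0 quad.
have [q_eq0|q_gt0] := eqVneq q 0.
  rewrite q_eq0 mulr0; have [->//|N_neq0] := eqVneq N 0.
  have r_eq : 2 * ((p + 1) / (2 * N)) * N = p + 1 by field; rewrite N_neq0.
  by have := quad ((p + 1) / (2 * N)); rewrite q_eq0 mulr0 r_eq; lra.
have {}q_gt0 : 0 < q by rewrite lt_def q_gt0.
have := quad q^-1.
have -> : p - 2 * q^-1 * N + q^-1 ^+ 2 * N * q = p - N / q.
  by field; rewrite gt_eqF.
by rewrite subr_ge0 ler_pdivrMr.
Qed.

Lemma convex_le_max (R : realDomainType) (w1 w2 s t : R) : 0 <= s -> 0 <= t -> s + t = 1 ->
  w1 * s + w2 * t <= Num.max w1 w2.
Proof.
move=> s_ge0 t_ge0 st1; rewrite -[leRHS]mulr1 -st1 mulrDr.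
by apply: lerD; apply: ler_wpM2r; rewrite // le_max lexx ?orbT.
Qed.

Lemma sup_ge0 (R : realType) (E : set R) : (forall x, E x -> 0 <= x) -> 0 <= sup E.
Proof.
move=> E_ge0; have [supE|/sup_out ->//] := pselect (has_sup E).
have [[x Ex] _] := supE; exact: le_trans (E_ge0 _ Ex) (sup_upper_bound supE Ex).
Qed.

(* [0 <= b] covers the empty set, whose [sup] is [0]. *)
Lemma sup_le_ge0_ub (R : realType) (E : set R) b : 0 <= b -> ubound E b -> sup E <= b.
Proof.
move=> b_ge0 Eb; have [nE|E0] := pselect (E !=set0)%classic; first exact: ge_sup.
suff -> : E = set0 by rewrite sup0.
by apply/seteqP; split=> // x Ex; apply: E0; exists x.
Qed.

Lemma sqrt_eq1 (R : rcfType) (a : R) : 0 <= a -> Num.sqrt a = 1 -> a = 1.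
Proof. by move=> a_ge0 sa1; rewrite -(sqr_sqrtr a_ge0) sa1 expr1n. Qed.

Section ComplexNorm.
Variable R : rcfType.
Implicit Types (a : R[i]) (r : R).

Lemma cnorm_ge0 a : 0 <= cnorm a.
Proof. by rewrite -ler0c; exact: (normr_ge0 a). Qed.

Lemma cnorm_real r : 0 <= r -> cnorm r%:C = r.
Proof.
by move=> r_ge0; apply: complexI; change (`|r%:C| = r%:C); rewrite ger0_norm ?ler0c.
Qed.

Lemma conjC_realC r : (r%:C)^* = r%:C.
Proof. exact: conjc_real. Qed.

Lemma mulcJ a : a * a^* = (cnorm a ^+ 2)%:C.
Proof. by rewrite -normCK rmorphXn. Qed.

End ComplexNorm.

Section Sesquilinear.
Variables (R : rcfType) (W : lmodType R[i]) (f : W -> W -> R[i]).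
Hypothesis linl : forall a x y z, f (a *: x + y) z = a * f x z + f y z.
Hypothesis linr : forall a x y z, f z (a *: x + y) = a^* * f z x + f z y.

Lemma form0l z : f 0 z = 0.
Proof.
have := linl 1 0 0 z; rewrite scale1r addr0 mul1r => f0.
by apply: (addrI (f 0 z)); rewrite addr0 -f0.
Qed.

Lemma form0r z : f z 0 = 0.
Proof.
have := linr 1 0 0 z; rewrite scale1r addr0 conjC1 mul1r => f0.
by apply: (addrI (f z 0)); rewrite addr0 -f0.
Qed.

Lemma formDl x y z : f (x + y) z = f x z + f y z.
Proof. by rewrite -[x]scale1r linl mul1r scale1r. Qed.

Lemma formDr x y z : f z (x + y) = f z x + f z y.
Proof. by rewrite -[x]scale1r linr conjC1 mul1r scale1r. Qed.

Lemma formZl a x z : f (a *: x) z = a * f x z.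
Proof. by rewrite -[a *: x]addr0 linl form0l addr0. Qed.

Lemma formZr a x z : f z (a *: x) = a^* * f z x.
Proof. by rewrite -[a *: x]addr0 linr form0r addr0. Qed.

Lemma formBl x y z : f (x - y) z = f x z - f y z.
Proof. by rewrite formDl -scaleN1r formZl mulN1r. Qed.

Lemma formBr x y z : f z (x - y) = f z x - f z y.
Proof. by rewrite formDr -scaleN1r formZr rmorphN1 mulN1r. Qed.

Lemma form_hermitian : (forall x, 0 <= f x x) -> forall x y, f y x = (f x y)^*.
Proof.
move=> pos x y.
have := pos (x + y); have := pos (x + 'i *: y).
rewrite !formDl !formDr !formZl !formZr.
rewrite -(RRe_real (ger0_real (pos x))) -(RRe_real (ger0_real (pos y))).
case: (f x y) => a1 a2; case: (f y x) => b1 b2.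
move: (complex.Re (f x x)) (complex.Re (f y y)) => p q.
rewrite !lecE /= => /andP[/eqP e1 _] /andP[/eqP e2 _].
apply/eqP; rewrite eq_complex /=; apply/andP; split; apply/eqP; lra.
Qed.

End Sesquilinear.

Lemma hermitian_form_linr (R : rcfType) (W : lmodType R[i]) (f : W -> W -> R[i]) :
  (forall a x y z, f (a *: x + y) z = a * f x z + f y z) ->
  (forall x y, f y x = (f x y)^*) ->
  forall a x y z, f z (a *: x + y) = a^* * f z x + f z y.
Proof. by move=> linl herm a x y z; rewrite !(herm _ z) linl rmorphD rmorphM. Qed.

Section SemiInnerProduct.
Variables (R : rcfType) (W : lmodType R[i]) (f : W -> W -> R[i]).
Hypothesis linl : forall a x y z, f (a *: x + y) z = a * f x z + f y z.
Hypothesis linr : forall a x y z, f z (a *: x + y) = a^* * f z x + f z y.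
Hypothesis pos : forall x, 0 <= f x x.

Definition sqnorm x : R := complex.Re (f x x).

Lemma formE x : f x x = (sqnorm x)%:C.
Proof. by rewrite RRe_real // ger0_real. Qed.

Lemma sqnorm_ge0 x : 0 <= sqnorm x.
Proof. by rewrite -ler0c -formE. Qed.

Lemma cnorm_formE x : cnorm (f x x) = sqnorm x.
Proof. by rewrite formE cnorm_real ?sqnorm_ge0. Qed.

Lemma form_expand x y t : f (x + t *: y) (x + t *: y) =
  f x x + t * (f x y)^* + t^* * f x y + t * t^* * f y y.
Proof.
rewrite (formDl linl) !(formDr linr) !(formZl linl) !(formZr linr).
by rewrite (form_hermitian linl linr pos x y); ring.
Qed.

Lemma form_CauchySchwarz x y : cnorm (f x y) ^+ 2 <= sqnorm x * sqnorm y.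
Proof.
apply: (le_mul_of_quadratic_ge0 (sqnorm_ge0 y) (sqr_ge0 _)) => r.
suff : 0 <= (sqnorm x - 2 * r * cnorm (f x y) ^+ 2 +
             r ^+ 2 * cnorm (f x y) ^+ 2 * sqnorm y)%:C by rewrite ler0c.
have -> : (sqnorm x - 2 * r * cnorm (f x y) ^+ 2 +
           r ^+ 2 * cnorm (f x y) ^+ 2 * sqnorm y)%:C =
    f (x + (- r%:C * f x y) *: y) (x + (- r%:C * f x y) *: y).
  transitivity ((sqnorm x)%:C - 2 * r%:C * (cnorm (f x y) ^+ 2)%:C +
                r%:C ^+ 2 * (cnorm (f x y) ^+ 2)%:C * (sqnorm y)%:C); first by ring.
  rewrite -mulcJ form_expand !formE rmorphM rmorphN /= conjC_realC; ring.
exact: pos.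
Qed.

Lemma form_Buzano x e y : sqnorm e = 1 ->
  2 * (cnorm (f x e) * cnorm (f e y)) <= (sqnorm x + sqnorm y) / 2 + cnorm (f x y).
Proof.
move=> e1; set z := (2 * f x e) *: e - x.
have sqnorm_z : sqnorm z = sqnorm x.
  apply: complexI; rewrite -!formE /z (formBl linl) !(formBr linr) !(formZl linl).
  rewrite !(formZr linr) formE e1 rmorph1 (form_hermitian linl linr pos x e).
  by rewrite rmorphM /= conjC_nat; ring.
have tri : 2 * (cnorm (f x e) * cnorm (f e y)) <= cnorm (f z y) + cnorm (f x y).
  apply: le_trans (le_normcD _ _).
  rewrite /z (formBl linl) (formZl linl) subrK -mulrA [2 * (f x e * _)]mulr_natl.
  by rewrite normcMn ComplexField.Normc.normcM mulr_natl.
have zy_le : cnorm (f z y) <= (sqnorm x + sqnorm y) / 2.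
  have := form_CauchySchwarz z y; rewrite sqnorm_z => cs.
  rewrite -ler_sqr ?nnegrE ?cnorm_ge0 ?divr_ge0 ?addr_ge0 ?sqnorm_ge0 //.
  apply: le_trans cs _; rewrite -subr_ge0.
  have -> : ((sqnorm x + sqnorm y) / 2) ^+ 2 - sqnorm x * sqnorm y =
            ((sqnorm x - sqnorm y) / 2) ^+ 2 by field.
  exact: sqr_ge0.
lra.
Qed.

Definition sqnorm_bounded (S : W -> W) :=
  exists c : R, 0 <= c /\ forall u, sqnorm (S u) <= c * sqnorm u.

Definition numrange_bounded (S : W -> W) :=
  exists c : R, forall u, cnorm (f (S u) u) <= c * sqnorm u.

Lemma sqnorm_bounded_comp S T :
  sqnorm_bounded S -> sqnorm_bounded T -> sqnorm_bounded (fun u => S (T u)).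
Proof.
move=> [cS [cS_ge0 boundS]] [cT [cT_ge0 boundT]].
exists (cS * cT); split=> [|u]; first exact: mulr_ge0.
by apply: le_trans (boundS _) _; rewrite -mulrA ler_wpM2l.
Qed.

Lemma numrange_bounded_of_sqnorm S : sqnorm_bounded S -> numrange_bounded S.
Proof.
move=> [c [c_ge0 boundS]]; exists (c + 1) => u.
apply: le_of_sqr_le_mul; rewrite ?cnorm_ge0 ?sqnorm_ge0 //.
apply: le_trans (form_CauchySchwarz _ _) _.
by rewrite expr2 mulrA ler_wpM2r ?sqnorm_ge0.
Qed.

Lemma numrange_boundedD S T :
  numrange_bounded S -> numrange_bounded T -> numrange_bounded (fun u => S u + T u).
Proof.
move=> [cS boundS] [cT boundT]; exists (cS + cT) => u.
by rewrite (formDl linl) mulrDl; apply: le_trans (le_normcD _ _) (lerD _ _).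
Qed.

Lemma numrange_boundedZ a S : numrange_bounded S -> numrange_bounded (fun u => a *: S u).
Proof.
move=> [c boundS]; exists (cnorm a * c) => u.
by rewrite (formZl linl) ComplexField.Normc.normcM -mulrA ler_wpM2l ?cnorm_ge0.
Qed.

End SemiInnerProduct.

Section SymmetricOperator.
Variables (R : realType) (W : lmodType R[i]) (f : W -> W -> R[i]) (P : W -> W).
Hypothesis linl : forall a x y z, f (a *: x + y) z = a * f x z + f y z.
Hypothesis linr : forall a x y z, f z (a *: x + y) = a^* * f z x + f z y.
Hypothesis pos : forall x, 0 <= f x x.
Hypothesis P_sym : forall u v, f (P u) v = f u (P v).

Lemma sqnorm_sym_le_of_growth x (m K : R) : 0 < m ->
  (forall n, sqnorm f (iter n P x) <= K * m ^+ n) -> sqnorm f (P x) <= m * sqnorm f x.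
Proof.
move=> m_gt0 growth.
apply: (logconvex_ratio_le (s := fun k => sqnorm f (iter k P x)) _ _ m_gt0 growth).
  by move=> k; exact: (sqnorm_ge0 pos).
move=> k /=; rewrite -(cnorm_formE pos) /= P_sym.
exact: (form_CauchySchwarz linl linr pos).
Qed.

End SymmetricOperator.

Section PositiveOperator.
Variables (R : realType) (V : lmodType R[i]) (ip : V -> V -> R[i]) (A : V -> V).
Hypothesis lin_ip : forall a x y z, ip (a *: x + y) z = a * ip x z + ip y z.
Hypothesis herm_ip : forall x y, ip y x = (ip x y)^*.
Hypothesis pos_ip : forall x, 0 <= ip x x.
Hypothesis posA : positive_op ip A.

Local Notation fA := (ipA ip A).
Local Notation sqnA := (sqnorm (ipA ip A)).

Let linr_ip := hermitian_form_linr lin_ip herm_ip.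

Let linl_A a x y z : fA (a *: x + y) z = a * fA x z + fA y z.
Proof. by rewrite /ipA posA.1.1 lin_ip. Qed.

Let linr_A a x y z : fA z (a *: x + y) = a^* * fA z x + fA z y.
Proof. exact: linr_ip. Qed.

Let pos_A x : 0 <= fA x x.
Proof. exact: posA.2. Qed.

Let herm_A := form_hermitian linl_A linr_A pos_A.

Lemma bounded_opZ S a x : bounded_op ip S -> S (a *: x) = a *: S x.
Proof.
move=> [linS _]; have := linS 1 0 0; rewrite !scale1r addr0 => S0.
have {}S0 : S 0 = 0 by apply: (addrI (S 0)); rewrite addr0 -S0.
by rewrite -[a *: x]addr0 linS S0 addr0.
Qed.

Lemma A_adjoint_sym S T : (forall x y, fA (S x) y = fA x (T y)) ->
  forall x y, fA (T x) y = fA x (S y).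
Proof. by move=> adj x y; rewrite herm_A -adj -herm_A. Qed.

Lemma sqnorm_bounded_of_bounded_op T : bounded_op ip T -> sqnorm_bounded ip T.
Proof.
case=> _ [M boundT]; exists (M ^+ 2); split=> [|u]; first exact: sqr_ge0.
rewrite -(sqr_sqrtr (sqnorm_ge0 pos_ip (T u))) -(sqr_sqrtr (sqnorm_ge0 pos_ip u)) -exprMn.
apply: lerXn2r; rewrite ?nnegrE ?sqrtr_ge0 //; last exact: boundT.
exact: le_trans (sqrtr_ge0 _) (boundT u).
Qed.

Lemma sqnormA_le_sqnorm : exists c, 0 <= c /\ forall u, sqnA u <= c * sqnorm ip u.
Proof.
have [c [c_ge0 boundA]] := sqnorm_bounded_of_bounded_op posA.1.
exists (c + 1); split=> [|u]; first by rewrite addr_ge0.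
apply: le_of_sqr_le_mul; rewrite ?sqnorm_ge0 //.
rewrite -(cnorm_formE pos_A).
apply: le_trans (form_CauchySchwarz lin_ip linr_ip pos_ip (A u) u) _.
by rewrite expr2 mulrA ler_wpM2r ?sqnorm_ge0.
Qed.

Lemma sqnorm_bounded_of_adjoint S T :
  bounded_op ip S -> is_A_adjoint ip A S T -> sqnorm_bounded fA S.
Proof.
move=> bS [bT adj]; pose P u := T (S u).
have P_sym u v : fA (P u) v = fA u (P v) by rewrite (A_adjoint_sym adj) adj.
have [cP [cP_ge0 boundP]] : sqnorm_bounded ip P.
  by apply: sqnorm_bounded_comp; exact: sqnorm_bounded_of_bounded_op.
have [cA [cA_ge0 boundA]] := sqnormA_le_sqnorm.
have P_le u : sqnA (P u) <= (cP + 1) * sqnA u.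
  apply: (sqnorm_sym_le_of_growth linl_A linr_A pos_A P_sym (K := cA * sqnorm ip u)).
    by rewrite ltr_wpDl.
  move=> n; apply: le_trans (boundA _) _; rewrite -mulrA ler_wpM2l // mulrC.
  apply: le_trans (iter_le_geometric cP_ge0 boundP n u) _.
  by rewrite ler_wpM2r ?sqnorm_ge0 // lerXn2r ?nnegrE ?addr_ge0 ?lerDl.
exists (cP + 1 + 1); split=> [|u]; first by rewrite !addr_ge0.
apply: le_of_sqr_le_mul; rewrite ?sqnorm_ge0 ?addr_ge0 //.
rewrite -(cnorm_formE pos_A) adj; apply: le_trans (form_CauchySchwarz linl_A linr_A pos_A _ _) _.
by rewrite expr2 mulrCA ler_wpM2l ?sqnorm_ge0 ?P_le.
Qed.

Lemma in_BA_adjoint S T : bounded_op ip S -> is_A_adjoint ip A S T -> in_BA ip A T.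
Proof. by move=> bS [bT adj]; split=> //; exists S; split=> //; exact: A_adjoint_sym. Qed.

Lemma sqnorm_bounded_of_in_BA S : in_BA ip A S -> sqnorm_bounded fA S.
Proof. by case=> bS [T adj]; exact: sqnorm_bounded_of_adjoint adj. Qed.

Lemma normA_sqnorm z : normA ip A z = Num.sqrt (sqnA z).
Proof. by []. Qed.

Lemma eq_omegaA S T : (forall z, S z = T z) -> omegaA ip A S = omegaA ip A T.
Proof. by move=> /funext ->. Qed.

Lemma omegaA_ge0 S : 0 <= omegaA ip A S.
Proof. by apply: sup_ge0 => _ [z _ <-]; exact: cnorm_ge0. Qed.

(* [sup] of a set without upper bound is [0], hence the boundedness hypothesis. *)
Lemma omegaA_ub_unit S z : numrange_bounded fA S -> sqnA z = 1 ->
  cnorm (fA (S z) z) <= omegaA ip A S.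
Proof.
move=> [c boundS] z1; apply: ub_le_sup; last by exists z; rewrite //= normA_sqnorm z1 sqrtr1.
exists c => _ [u + <-]; rewrite /= normA_sqnorm => u1.
by rewrite -[c]mulr1 -(sqrt_eq1 (sqnorm_ge0 pos_A u) u1).
Qed.

Lemma omegaA_ub S : numrange_bounded fA S -> (forall a x, S (a *: x) = a *: S x) ->
  forall x, cnorm (fA (S x) x) <= omegaA ip A S * sqnA x.
Proof.
move=> boundS homS x.
have [x0|x_neq0] := eqVneq (sqnA x) 0.
  have := form_CauchySchwarz linl_A linr_A pos_A (S x) x; rewrite x0 !mulr0.
  by have := cnorm_ge0 (fA (S x) x); nra.
have x_gt0 : 0 < sqnA x by rewrite lt_def x_neq0 sqnorm_ge0.
pose t := (Num.sqrt (sqnA x))^-1.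
have t2x : t ^+ 2 * sqnA x = 1 by rewrite exprVn sqr_sqrtr ?mulVf // ltW.
have scaleE u v : fA (t%:C *: u) (t%:C *: v) = (t ^+ 2)%:C * fA u v.
  by rewrite (formZl linl_A) (formZr linr_A) conjC_realC; ring.
have unit : sqnA (t%:C *: x) = 1.
  by apply: complexI; rewrite -(formE pos_A) scaleE (formE pos_A) -rmorphM t2x.
have := omegaA_ub_unit boundS unit.
rewrite homS scaleE ComplexField.Normc.normcM cnorm_real ?sqr_ge0 //.
by rewrite -(ler_pM2r x_gt0) mulrAC t2x mul1r.
Qed.

Local Notation fA0 := (ipA0 ip A).

Let linl_A0 a x y z : fA0 (a *: x + y) z = a * fA0 x z + fA0 y z.
Proof. by case: x y z => [x1 x2] [y1 y2] [z1 z2]; rewrite /ipA0 /= !linl_A; ring. Qed.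

Let linr_A0 a x y z : fA0 z (a *: x + y) = a^* * fA0 z x + fA0 z y.
Proof. by case: x y z => [x1 x2] [y1 y2] [z1 z2]; rewrite /ipA0 /= !linr_A; ring. Qed.

Let pos_A0 x : 0 <= fA0 x x.
Proof. exact: addr_ge0. Qed.

Lemma sqnorm_ipA0 u1 u2 : sqnorm fA0 (u1, u2) = sqnA u1 + sqnA u2.
Proof. by rewrite /sqnorm /ipA0 /=; case: (fA u1 u1) => ? ?; case: (fA u2 u2). Qed.

Lemma normA0_sqnorm z : normA0 ip A z = Num.sqrt (sqnorm fA0 z).
Proof. by []. Qed.

Lemma dwA0_sqr_le X b : 0 <= b ->
  (forall z, sqnorm fA0 z = 1 -> cnorm (fA0 (X z) z) ^+ 2 + normA0 ip A (X z) ^+ 4 <= b) ->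
  dwA0 ip A X ^+ 2 <= b.
Proof.
move=> b_ge0 Xb; rewrite -(sqr_sqrtr b_ge0); apply: lerXn2r.
- by rewrite nnegrE; apply: sup_ge0 => _ [z _ <-]; exact: sqrtr_ge0.
- by rewrite nnegrE sqrtr_ge0.
apply: sup_le_ge0_ub; rewrite ?sqrtr_ge0 // => _ [z + <-].
rewrite /= normA0_sqnorm => z1; rewrite ler_wsqrtr // Xb //.
exact: sqrt_eq1 (sqnorm_ge0 pos_A0 z) z1.
Qed.

Lemma omegaA_comp_ub S T x : in_BA ip A S -> in_BA ip A T ->
  cnorm (fA (S (T x)) x) <= omegaA ip A (fun z => S (T z)) * sqnA x.
Proof.
move=> S_BA T_BA; apply: omegaA_ub.
  apply: (numrange_bounded_of_sqnorm linl_A linr_A pos_A).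
  by apply: sqnorm_bounded_comp; exact: sqnorm_bounded_of_in_BA.
by move=> a z; rewrite (bounded_opZ _ _ T_BA.1) (bounded_opZ _ _ S_BA.1).
Qed.

Lemma omegaA_sum_ub S Ss T Ts x : bounded_op ip S -> is_A_adjoint ip A S Ss ->
  bounded_op ip T -> is_A_adjoint ip A T Ts ->
  sqnA (Ss x) + sqnA (T x) + 4 * sqnA (Ts (T x)) <=
  omegaA ip A (fun z => S (Ss z) + Ts (T z) + (4 : R[i]) *: Ts (T (Ts (T z)))) * sqnA x.
Proof.
move=> bS adjS bT adjT.
have Ss_BA := in_BA_adjoint bS adjS; have Ts_BA := in_BA_adjoint bT adjT.
have S_BA : in_BA ip A S by split; last exists Ss.
have T_BA : in_BA ip A T by split; last exists Ts.
set M := fun z => _.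
have -> : sqnA (Ss x) + sqnA (T x) + 4 * sqnA (Ts (T x)) = cnorm (fA (M x) x).
  rewrite /M !(formDl linl_A) (formZl linl_A) adjS.2 (A_adjoint_sym adjT.2).
  rewrite (A_adjoint_sym adjT.2 (T (Ts (T x)))) (adjT.2 (Ts (T x))) !(formE pos_A).
  have -> : (sqnA (Ss x))%:C + (sqnA (T x))%:C + 4 * (sqnA (Ts (T x)))%:C =
            (sqnA (Ss x) + sqnA (T x) + 4 * sqnA (Ts (T x)))%:C by ring.
  by rewrite cnorm_real // !addr_ge0 ?mulr_ge0 ?sqnorm_ge0.
apply: omegaA_ub.
  have SSs := sqnorm_bounded_comp (sqnorm_bounded_of_in_BA S_BA) (sqnorm_bounded_of_in_BA Ss_BA).
  have TsT := sqnorm_bounded_comp (sqnorm_bounded_of_in_BA Ts_BA) (sqnorm_bounded_of_in_BA T_BA).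
  have nb := numrange_bounded_of_sqnorm linl_A linr_A pos_A.
  apply: (numrange_boundedD linl_A (numrange_boundedD linl_A (nb _ SSs) (nb _ TsT))).
  exact: (numrange_boundedZ linl_A _ (nb _ (sqnorm_bounded_comp TsT TsT))).
move=> a z; rewrite /M !(bounded_opZ _ _ bS, bounded_opZ _ _ bT, bounded_opZ _ _ adjS.1,
  bounded_opZ _ _ adjT.1).
by rewrite !scalerDr !scalerA mulrC.
Qed.

Section Antidiagonal.
Variables B C Bs Cs : V -> V.
Hypothesis adjB : forall x y, fA (B x) y = fA x (Bs y).
Hypothesis adjC : forall x y, fA (C x) y = fA x (Cs y).

Lemma normA0_antidiag x y :
  normA0 ip A (antidiag B C (x, y)) ^+ 4 = (sqnA (B y) + sqnA (C x)) ^+ 2.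
Proof.
rewrite normA0_sqnorm /= sqnorm_ipA0 -[4%N]/(2 * 2)%N exprM sqr_sqrtr //.
by rewrite addr_ge0 ?sqnorm_ge0.
Qed.

Lemma antidiag_Buzano x y : sqnA x + sqnA y = 1 ->
  cnorm (fA0 (antidiag B C (x, y)) (x, y)) ^+ 2 <=
  (sqnA (Bs x) + sqnA (C x) + sqnA (B y) + sqnA (Cs y)) / 4 +
  (cnorm (fA (B (C x)) x) + cnorm (fA (C (B y)) y)) / 2.
Proof.
move=> xy1; have z1 : sqnorm fA0 (x, y) = 1 by rewrite sqnorm_ipA0.
have := form_Buzano linl_A0 linr_A0 pos_A0 (B y, C x) (Cs y, Bs x) z1.
rewrite !sqnorm_ipA0.
have -> : cnorm (fA0 (x, y) (Cs y, Bs x)) = cnorm (fA0 (B y, C x) (x, y)).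
  by rewrite /ipA0 /= -adjB -adjC addrC.
have : cnorm (fA0 (B y, C x) (Cs y, Bs x)) <= cnorm (fA (B (C x)) x) + cnorm (fA (C (B y)) y).
  by rewrite /ipA0 /= -adjC -adjB addrC; exact: le_normcD.
rewrite /antidiag /=; lra.
Qed.

Lemma antidiag_sqnorm_sqr x y : sqnA x + sqnA y = 1 ->
  (sqnA (B y) + sqnA (C x)) ^+ 2 <= sqnA (Cs (C x)) + sqnA (Bs (B y)).
Proof.
move=> xy1; have := form_CauchySchwarz linl_A0 linr_A0 pos_A0 (Cs (C x), Bs (B y)) (x, y).
rewrite !sqnorm_ipA0 xy1 mulr1 /ipA0 /= !(A_adjoint_sym adjB, A_adjoint_sym adjC).
by rewrite !(formE pos_A) -rmorphD cnorm_real ?addr_ge0 ?sqnorm_ge0 // addrC.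
Qed.

End Antidiagonal.

Lemma dwA0_antidiag_le B C Bs Cs :
  in_BA ip A B -> in_BA ip A C -> is_A_adjoint ip A B Bs -> is_A_adjoint ip A C Cs ->
  dwA0 ip A (antidiag B C) ^+ 2 <=
    4^-1 * Num.max
      (omegaA ip A (fun z => B (Bs z) + Cs (C z) + (4 : R[i]) *: Cs (C (Cs (C z)))))
      (omegaA ip A (fun z => Bs (B z) + C (Cs z) + (4 : R[i]) *: Bs (B (Bs (B z)))))
    + 2^-1 * Num.max (omegaA ip A (fun z => B (C z))) (omegaA ip A (fun z => C (B z))).
Proof.
move=> B_BA C_BA adjB adjC.
apply: dwA0_sqr_le => [|[x y]].
  by rewrite addr_ge0 ?mulr_ge0 ?invr_ge0 ?ler0n // le_max omegaA_ge0.
rewrite sqnorm_ipA0 normA0_antidiag => xy1.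
have := antidiag_Buzano adjB.2 adjC.2 xy1; have := antidiag_sqnorm_sqr adjB.2 adjC.2 xy1.
have := omegaA_comp_ub x B_BA C_BA; have := omegaA_comp_ub y C_BA B_BA.
have := omegaA_sum_ub x B_BA.1 adjB C_BA.1 adjC.
have := omegaA_sum_ub y C_BA.1 adjC B_BA.1 adjB.
under eq_omegaA => z do rewrite [C _ + _]addrC.
set w1 := omegaA ip A (fun z => B (Bs z) + _ + _).
set w2 := omegaA ip A (fun z => Bs (B z) + _ + _).
set w3 := omegaA ip A (fun z => B (C z)).
set w4 := omegaA ip A (fun z => C (B z)).
have := convex_le_max w1 w2 (sqnorm_ge0 pos_A x) (sqnorm_ge0 pos_A y) xy1.
have := convex_le_max w3 w4 (sqnorm_ge0 pos_A x) (sqnorm_ge0 pos_A y) xy1.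
lra.
Qed.

End PositiveOperator.

Unset Implicit Arguments.

Theorem theorem3p6 (R : realType) (V : lmodType R[i]) (ip : V -> V -> R[i])
    (A B C Bs Cs : V -> V) :
  hilbert ip -> positive_op ip A ->
  in_BA ip A B -> in_BA ip A C ->
  is_sharpA ip A B Bs -> is_sharpA ip A C Cs ->
  dwA0 ip A (antidiag B C) ^+ 2 <=
    4^-1 * Num.max
      (omegaA ip A (fun z => B (Bs z) + Cs (C z) + (4 : R[i]) *: Cs (C (Cs (C z)))))
      (omegaA ip A (fun z => Bs (B z) + C (Cs z) + (4 : R[i]) *: Bs (B (Bs (B z)))))
    + 2^-1 * Num.max (omegaA ip A (fun z => B (C z))) (omegaA ip A (fun z => C (B z))).
Proof.
move=> hH hA hB hC hBs hCs.
exact: (dwA0_antidiag_le (ip_linl hH) (ip_conj hH) (ip_pos hH) hA hB hC hBs.1 hCs.1).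
Qed.
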